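(* Let $c\in C^\infty(\mathbb R)$ and let $u$ satisfy $u_t=uu_1+\hbar^2c(u)u_1^3$ (with $u_k=\partial_x^ku$). Define the polynomial Miura map $$\begin{aligned}v={}&u-\hbar^2cu_1^2+\hbar^4\Big(\tfrac43cc'u_1^4+2c^2u_1^2u_2\Big)\\&+\hbar^6\Big(-\tfrac{28}{15}c{c'}^2u_1^6-\tfrac{14}{15}c^2c''u_1^6-\tfrac{26}{3}c^2c'u_1^4u_2-4c^3u_1^2u_2^2-\tfrac43c^3u_1^3u_3\Big)\\&+\hbar^8\Big(\tfrac{836}{315}c{c'}^3u_1^8+\tfrac{1268}{315}c^2c'c''u_1^8+\tfrac{16}{35}c^3c'''u_1^8+\tfrac{1138}{45}c^2{c'}^2u_1^6u_2+\tfrac{128}{15}c^3c''u_1^6u_2\\&\qquad+\tfrac{112}{3}c^3c'u_1^4u_2^2+8c^4u_1^2u_2^3+8c^3c'u_1^5u_3+8c^4u_1^3u_2u_3+\tfrac23c^4u_1^4u_4\Big),\end{aligned}$$ where $c$ and its derivatives are evaluated at $u$. Then $v_t-vv_x=O(\hbar^{10})$ as a formal expansion in $\hbar$; i.e. the equation $u_t=uu_x+\hbar^2c(u)u_x^3$ is trivial (polynomially Miura-equivalent to the Monge equation $v_t=vv_x$) up to $O(\hbar^8)$.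
   Context: $\hbar$ is a formal parameter; primes on $c$ denote derivatives with respect to $u$; $v_t$ is computed by the chain rule using the evolution equation for $u$. *)

From HB Require Import structures.
From mathcomp Require Import all_boot all_order all_algebra.
From mathcomp Require Import all_classical all_reals all_analysis.
Set Implicit Arguments. Unset Strict Implicit. Unset Printing Implicit Defensive.
Import Order.TTheory GRing.Theory Num.Theory.
Local Open Scope ring_scope.
Local Open Scope classical_set_scope.

Definition smooth {R : realType} (f : R -> R) : Prop :=
  forall (n : nat) (x : R), derivable ((derive1n n f)) x 1.

(* The Miura polynomial, as a function of hbar, of the jets
   u0 = u, u1..u4 = u_x .. u_xxxx, and c0..c3 = c(u), c'(u), c''(u), c'''(u). *)
Definition miura_poly {R : realType} (h u0 u1 u2 u3 u4 c0 c1 c2 c3 : R) : R :=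
  u0 - h ^+ 2 * c0 * u1 ^+ 2
  + h ^+ 4 * (4 / 3 * c0 * c1 * u1 ^+ 4 + 2 * c0 ^+ 2 * u1 ^+ 2 * u2)
  + h ^+ 6 * (- (28 / 15) * c0 * c1 ^+ 2 * u1 ^+ 6
              - 14 / 15 * c0 ^+ 2 * c2 * u1 ^+ 6
              - 26 / 3 * c0 ^+ 2 * c1 * u1 ^+ 4 * u2
              - 4 * c0 ^+ 3 * u1 ^+ 2 * u2 ^+ 2
              - 4 / 3 * c0 ^+ 3 * u1 ^+ 3 * u3)
  + h ^+ 8 * (836 / 315 * c0 * c1 ^+ 3 * u1 ^+ 8
              + 1268 / 315 * c0 ^+ 2 * c1 * c2 * u1 ^+ 8
              + 16 / 35 * c0 ^+ 3 * c3 * u1 ^+ 8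
              + 1138 / 45 * c0 ^+ 2 * c1 ^+ 2 * u1 ^+ 6 * u2
              + 128 / 15 * c0 ^+ 3 * c2 * u1 ^+ 6 * u2
              + 112 / 3 * c0 ^+ 3 * c1 * u1 ^+ 4 * u2 ^+ 2
              + 8 * c0 ^+ 4 * u1 ^+ 2 * u2 ^+ 3
              + 8 * c0 ^+ 3 * c1 * u1 ^+ 5 * u3
              + 8 * c0 ^+ 4 * u1 ^+ 3 * u2 * u3
              + 2 / 3 * c0 ^+ 4 * u1 ^+ 4 * u4).

Definition miura {R : realType} (h : R) (c w : R -> R) : R -> R :=
  fun x => miura_poly h (w x) ((derive1n 1 w) x) ((derive1n 2 w) x) ((derive1n 3 w) x) ((derive1n 4 w) x)
             (c (w x)) ((derive1n 1 c) (w x)) ((derive1n 2 c) (w x)) ((derive1n 3 c) (w x)).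

Definition rhs {R : realType} (h : R) (c w : R -> R) : R -> R :=
  fun x => w x * (derive1n 1 w) x + h ^+ 2 * c (w x) * ((derive1n 1 w) x) ^+ 3.

(* v_t computed by the chain rule using the evolution equation:
   v_t = sum_k (dv/du_k) * D_x^k (u_t), i.e. the derivative of v along the
   evolutionary vector field u_t = rhs, realised as the Gateaux derivative
   d/de v[u + e * rhs(u)] at e = 0. *)
Definition miura_t {R : realType} (h : R) (c u : R -> R) : R -> R :=
  fun x => derive1 (fun e : R => miura h c (fun y => u y + e * rhs h c u y) x) 0.

(* Write v = a_0 + h^2 a_1 + ... + h^8 a_4, where each a_k is a polynomial in
   the jets u, u_1, ..., u_4 and c(u), ..., c'''(u).  Then v_x = sum_k h^(2k) b_k
   with b_k = D_x a_k, and, the flow being u u_1 + h^2 c(u) u_1^3, the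
   chain-rule derivative v_t is an even polynomial of degree 10 in h.  The
   coefficients of the Miura map are precisely those for which the coefficients
   of h^0, ..., h^8 in v_t equal sum_(i+j=k) a_i b_j; this is an identity
   between differential polynomials, checked by differentiating out all jets.
   What remains of v_t - v v_x is h^10 times a polynomial in h^2. *)

From HB Require Import structures.
From mathcomp Require Import all_boot all_order all_algebra.
From mathcomp Require Import all_classical all_reals all_analysis.
From mathcomp Require Import ring.
Import Order.TTheory GRing.Theory Num.Theory.
Local Open Scope ring_scope.
Local Open Scope classical_set_scope.

Section DerivativeRules.
Context {R : realType}.
Implicit Types (f g : R -> R) (x a b : R).

Lemma is_derive_const (k : R) x : is_derive x 1 (fun _ => k) (0 : R).
Proof. exact: is_derive_cst. Qed.

Lemma is_derive_idfun x : is_derive x 1 (fun y => y) (1 : R).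
Proof. exact: is_derive_id. Qed.

Lemma is_derive_add {f g x a b} : is_derive x 1 f a -> is_derive x 1 g b ->
  is_derive x 1 (fun y => f y + g y) (a + b).
Proof. by move=> ? ?; apply: (@is_deriveD _ _ _ f g). Qed.

Lemma is_derive_sub {f g x a b} : is_derive x 1 f a -> is_derive x 1 g b ->
  is_derive x 1 (fun y => f y - g y) (a - b).
Proof. by move=> ? ?; apply: (@is_deriveB _ _ _ f g). Qed.

Lemma is_derive_opp {f x a} : is_derive x 1 f a -> is_derive x 1 (fun y => - f y) (- a).
Proof. by move=> ?; apply: (@is_deriveN _ _ _ f). Qed.

Lemma is_derive_mul {f g x a b} : is_derive x 1 f a -> is_derive x 1 g b ->
  is_derive x 1 (fun y => f y * g y) (f x * b + g x * a).
Proof. by move=> df dg; have := is_deriveM df dg. Qed.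

Lemma is_derive_exprS {f} n {x a} : is_derive x 1 f a ->
  is_derive x 1 (fun y => f y ^+ n.+1) (n.+1%:R * f x ^+ n * a).
Proof. by move=> df; have := is_deriveX n.+1 df; rewrite exprfctE. Qed.

Lemma is_derive_comp {f g x a b} : is_derive (g x) 1 f a -> is_derive x 1 g b ->
  is_derive x 1 (fun y => f (g y)) (a * b).
Proof. by move=> ? ?; apply: (@is_derive1_comp _ f g). Qed.

Lemma derive1_is_derive {f x a} : is_derive x 1 f a -> f^`() x = a.
Proof. by move=> fa; rewrite derive1E derive_val. Qed.

End DerivativeRules.

Section IteratedDerivatives.
Context {R : realType}.
Implicit Types (f g : R -> R) (J : nat -> R -> R) (x b : R) (k n : nat).

Definition derivable_upto n f := forall k x, (k < n)%N -> derivable (derive1n k f) x 1.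

Lemma derivable_uptoP {n f k} x : derivable_upto n f -> (k < n)%N ->
  is_derive x 1 (derive1n k f) (derive1n k.+1 f x).
Proof.
by move=> df kn; have := derivableP (df k x kn); rewrite derive1nS derive1E.
Qed.

Lemma smooth_derivable_upto {f} n : smooth f -> derivable_upto n f.
Proof. by move=> sf k x _; apply: sf. Qed.

Lemma derivable_upto_le {m n f} : derivable_upto n f -> (m <= n)%N -> derivable_upto m f.
Proof. by move=> df mn k x km; apply: df; apply: leq_trans mn. Qed.

Lemma is_derive_smooth_comp {f g} k {x b} : smooth f -> is_derive x 1 g b ->
  is_derive x 1 (fun y => derive1n k f (g y)) (derive1n k.+1 f (g x) * b).
Proof.
move=> sf dg; apply: is_derive_comp dg.
exact: derivable_uptoP (g x) (smooth_derivable_upto k.+1 sf) (ltnSn k).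
Qed.

Lemma derive1n_add_scale f g (e : R) n : derivable_upto n f -> derivable_upto n g ->
  derive1n n (fun y => f y + e * g y) = fun y => derive1n n f y + e * derive1n n g y.
Proof.
elim: n => [//|n IHn] df dg.
rewrite derive1nS IHn; try exact: derivable_upto_le _ (leqnSn n).
apply: funext => y; apply: derive1_is_derive; apply: is_derive_eq.
  exact: is_derive_add (derivable_uptoP y df (ltnSn n))
    (is_derive_mul (is_derive_const e y) (derivable_uptoP y dg (ltnSn n))).
by rewrite mulr0 addr0.
Qed.

Lemma derive1n_is_derive_chain {J n} :
  (forall k x, (k < n)%N -> is_derive x 1 (J k) (J k.+1 x)) ->
  forall k, (k <= n)%N -> derive1n k (J 0) = J k.
Proof.
move=> dJ; elim=> [//|k IHk] kn.
rewrite derive1nS IHk; last exact: ltnW.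
by apply: funext => x; apply: derive1_is_derive (dJ k x kn).
Qed.

Lemma derivable_upto_is_derive_chain J n :
  (forall k x, (k < n)%N -> is_derive x 1 (J k) (J k.+1 x)) -> derivable_upto n (J 0).
Proof.
move=> dJ k x kn; rewrite (derive1n_is_derive_chain dJ k (ltnW kn)).
by have := dJ k x kn.
Qed.

End IteratedDerivatives.

Lemma horner_take_poly_mul (R : comNzRingType) n (a b : nat -> R) y :
  (take_poly n (\poly_(i < n) a i * \poly_(i < n) b i)).[y] =
  \sum_(k < n) (\sum_(i < k.+1) a i * b (k - i)%N) * y ^+ k.
Proof.
rewrite horner_poly; apply: eq_bigr => k _; rewrite coefM; congr (_ * _).
apply: eq_bigr => i _; rewrite !coef_poly.
have ik : (i < n)%N by apply: leq_ltn_trans (ltn_ord k); rewrite -ltnS.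
by rewrite ik (leq_ltn_trans (leq_subr _ _) (ltn_ord k)).
Qed.

Lemma horner_mul_take_drop (R : comNzRingType) n (p q : {poly R}) y :
  p.[y] * q.[y] = (take_poly n (p * q)).[y] + y ^+ n * (drop_poly n (p * q)).[y].
Proof.
by rewrite -hornerM -{1}(poly_take_drop n (p * q)) hornerD hornerM hornerXn [_ * y ^+ n]mulrC.
Qed.

Ltac solve_is_derive := lazymatch goal with
| |- is_derive _ _ (fun _ => ?k) _ => apply: is_derive_const
| |- is_derive _ _ (fun y => y) _ => apply: is_derive_idfun
| |- is_derive _ _ (fun y => @?f y + @?g y) _ =>
    eapply (is_derive_add (f := f) (g := g)); [solve_is_derive | solve_is_derive]
| |- is_derive _ _ (fun y => @?f y - @?g y) _ =>
    eapply (is_derive_sub (f := f) (g := g)); [solve_is_derive | solve_is_derive]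
| |- is_derive _ _ (fun y => - @?f y) _ => eapply (is_derive_opp (f := f)); solve_is_derive
| |- is_derive _ _ (fun y => @?f y * @?g y) _ =>
    eapply (is_derive_mul (f := f) (g := g)); [solve_is_derive | solve_is_derive]
| |- is_derive _ _ (fun y => @?f y ^+ (S ?n)) _ =>
    eapply (is_derive_exprS (f := f) n); solve_is_derive
| |- is_derive _ _ (fun y => derive1n ?k ?f (@?g y)) _ =>
    eapply (is_derive_smooth_comp (g := g) k); [assumption | solve_is_derive]
| |- is_derive _ _ (fun y => ?f (@?g y)) _ =>
    is_var f; eapply (is_derive_smooth_comp (f := f) (g := g) 0); [assumption | solve_is_derive]
end.

(* [erewrite] matches syntactically; ssreflect's [rewrite] would try to unify
   the pattern with every other [derive1] in the goal, which is very slow. *)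
Ltac rewrite_derive1 := match goal with |- context [derive1 ?F ?x] =>
  let dF := fresh "dF" in
  eassert (dF : is_derive x 1 F _); [solve_is_derive | erewrite (derive1_is_derive dF); clear dF]
end.

(* The product rule evaluates the factors at the point e = 0 of a Gateaux
   derivative, leaving atoms such as [c (u x + 0 * w)].  The instances are left
   as pattern variables because the goal mixes several paths to the ring of R. *)
Ltac drop_zero_shifts := repeat match goal with
| |- context [@Algebra.add ?M ?a (@GRing.mul ?S (@Algebra.zero ?Z) ?b)] =>
    replace (@Algebra.add M a (@GRing.mul S (@Algebra.zero Z) b)) with a
      by (by rewrite mul0r addr0)
end.

Ltac abstract_jets := repeat match goal with
| |- context [derive1n ?k ?f ?a] => let j := fresh "j" in set j := derive1n k f a; clearbody j
| |- context [?f ?a] => is_var f; let j := fresh "j" in set j := f a; clearbody j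
end.

Definition miura_coef {R : realType} (k : nat) (u0 u1 u2 u3 u4 c0 c1 c2 c3 : R) : R :=
  match k with
  | 0 => u0
  | 1 => - c0 * u1 ^+ 2
  | 2 => 4 / 3 * c0 * c1 * u1 ^+ 4 + 2 * c0 ^+ 2 * u1 ^+ 2 * u2
  | 3 => - (28 / 15) * c0 * c1 ^+ 2 * u1 ^+ 6 - 14 / 15 * c0 ^+ 2 * c2 * u1 ^+ 6
      - 26 / 3 * c0 ^+ 2 * c1 * u1 ^+ 4 * u2 - 4 * c0 ^+ 3 * u1 ^+ 2 * u2 ^+ 2
      - 4 / 3 * c0 ^+ 3 * u1 ^+ 3 * u3
  | 4 => 836 / 315 * c0 * c1 ^+ 3 * u1 ^+ 8 + 1268 / 315 * c0 ^+ 2 * c1 * c2 * u1 ^+ 8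
      + 16 / 35 * c0 ^+ 3 * c3 * u1 ^+ 8 + 1138 / 45 * c0 ^+ 2 * c1 ^+ 2 * u1 ^+ 6 * u2
      + 128 / 15 * c0 ^+ 3 * c2 * u1 ^+ 6 * u2 + 112 / 3 * c0 ^+ 3 * c1 * u1 ^+ 4 * u2 ^+ 2
      + 8 * c0 ^+ 4 * u1 ^+ 2 * u2 ^+ 3 + 8 * c0 ^+ 3 * c1 * u1 ^+ 5 * u3
      + 8 * c0 ^+ 4 * u1 ^+ 3 * u2 * u3 + 2 / 3 * c0 ^+ 4 * u1 ^+ 4 * u4
  | _ => 0
  end.

Lemma miura_poly_even {R : realType} (h u0 u1 u2 u3 u4 c0 c1 c2 c3 : R) :
  miura_poly h u0 u1 u2 u3 u4 c0 c1 c2 c3 =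
  (\poly_(k < 5) miura_coef k u0 u1 u2 u3 u4 c0 c1 c2 c3).[h ^+ 2].
Proof. by rewrite horner_poly !big_ord_recr big_ord0 /= /miura_poly; ring. Qed.

Section Jets.
Context {R : realType}.
Variables c u : R -> R.
Hypotheses (c_smooth : smooth c) (u_smooth : smooth u).
Implicit Types (k : nat) (h x : R).

Local Notation u1 := (derive1n 1 u).
Local Notation u2 := (derive1n 2 u).
Local Notation u3 := (derive1n 3 u).
Local Notation u4 := (derive1n 4 u).
Local Notation u5 := (derive1n 5 u).
Local Notation c1 := (derive1n 1 c).
Local Notation c2 := (derive1n 2 c).
Local Notation c3 := (derive1n 3 c).
Local Notation c4 := (derive1n 4 c).

Definition monge_jet k : R -> R :=
  match k with
  | 0 => fun y => u y * u1 y
  | 1 => fun y => u1 y ^+ 2 + u y * u2 y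
  | 2 => fun y => 3 * u1 y * u2 y + u y * u3 y
  | 3 => fun y => 3 * u2 y ^+ 2 + 4 * u1 y * u3 y + u y * u4 y
  | 4 => fun y => 10 * u2 y * u3 y + 5 * u1 y * u4 y + u y * u5 y
  | _ => fun _ => 0
  end.

Definition deformation_jet k : R -> R :=
  match k with
  | 0 => fun y => c (u y) * u1 y ^+ 3
  | 1 => fun y => 3 * c (u y) * u1 y ^+ 2 * u2 y + c1 (u y) * u1 y ^+ 4
  | 2 => fun y => 6 * c (u y) * u1 y * u2 y ^+ 2 + 3 * c (u y) * u1 y ^+ 2 * u3 y
      + 7 * c1 (u y) * u1 y ^+ 3 * u2 y + c2 (u y) * u1 y ^+ 5
  | 3 => fun y => 6 * c (u y) * u2 y ^+ 3 + 18 * c (u y) * u1 y * u2 y * u3 y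
      + 3 * c (u y) * u1 y ^+ 2 * u4 y + 27 * c1 (u y) * u1 y ^+ 2 * u2 y ^+ 2
      + 10 * c1 (u y) * u1 y ^+ 3 * u3 y + 12 * c2 (u y) * u1 y ^+ 4 * u2 y
      + c3 (u y) * u1 y ^+ 6
  | 4 => fun y => 36 * c (u y) * u2 y ^+ 2 * u3 y + 18 * c (u y) * u1 y * u3 y ^+ 2
      + 24 * c (u y) * u1 y * u2 y * u4 y + 3 * c (u y) * u1 y ^+ 2 * u5 y
      + 60 * c1 (u y) * u1 y * u2 y ^+ 3 + 102 * c1 (u y) * u1 y ^+ 2 * u2 y * u3 y
      + 13 * c1 (u y) * u1 y ^+ 3 * u4 y + 75 * c2 (u y) * u1 y ^+ 3 * u2 y ^+ 2
      + 22 * c2 (u y) * u1 y ^+ 4 * u3 y + 18 * c3 (u y) * u1 y ^+ 5 * u2 y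
      + c4 (u y) * u1 y ^+ 7
  | _ => fun _ => 0
  end.

Lemma monge_jet_is_derive k x : (k < 4)%N -> is_derive x 1 (monge_jet k) (monge_jet k.+1 x).
Proof.
case: k => [|[|[|[|//]]]] _; cbv beta iota delta [monge_jet];
  by apply: is_derive_eq; [solve_is_derive | abstract_jets; ring].
Qed.

Lemma deformation_jet_is_derive k x : (k < 4)%N ->
  is_derive x 1 (deformation_jet k) (deformation_jet k.+1 x).
Proof.
case: k => [|[|[|[|//]]]] _; cbv beta iota delta [deformation_jet];
  by apply: is_derive_eq; [solve_is_derive | abstract_jets; ring].
Qed.

Definition rhs_jet h k : R -> R := fun y => monge_jet k y + h ^+ 2 * deformation_jet k y.

Lemma rhs_jet_is_derive h k x : (k < 4)%N -> is_derive x 1 (rhs_jet h k) (rhs_jet h k.+1 x).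
Proof.
move=> k4; rewrite /rhs_jet; apply: is_derive_eq.
  exact: is_derive_add (monge_jet_is_derive k x k4)
    (is_derive_mul (is_derive_const _ x) (deformation_jet_is_derive k x k4)).
by rewrite mulr0 addr0.
Qed.

Lemma rhsE h : rhs h c u = rhs_jet h 0.
Proof. by apply: funext => y; rewrite /rhs /rhs_jet /=; abstract_jets; ring. Qed.

Lemma derive1n_rhs h k : (k <= 4)%N -> derive1n k (rhs h c u) = rhs_jet h k.
Proof. by move=> k4; rewrite rhsE; apply: derive1n_is_derive_chain (rhs_jet_is_derive h) k k4. Qed.

Lemma derivable_upto_rhs h : derivable_upto 4 (rhs h c u).
Proof. by rewrite rhsE; apply: derivable_upto_is_derive_chain (rhs_jet_is_derive h). Qed.

Lemma derive1n_deformation k : (k <= 4)%N -> derive1n k (deformation_jet 0) = deformation_jet k.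
Proof. exact: derive1n_is_derive_chain deformation_jet_is_derive k. Qed.

Lemma derivable_upto_deformation : derivable_upto 4 (deformation_jet 0).
Proof. exact: derivable_upto_is_derive_chain deformation_jet_is_derive. Qed.

Definition jet_eval (F : R -> R -> R -> R -> R -> R -> R -> R -> R -> R) (w : R -> R) x :=
  F (w x) (derive1n 1 w x) (derive1n 2 w x) (derive1n 3 w x) (derive1n 4 w x)
    (c (w x)) (c1 (w x)) (c2 (w x)) (c3 (w x)).

Lemma jet_eval_shift F w x : derivable_upto 4 w ->
  (fun e => jet_eval F (fun y => u y + e * w y) x) =
  fun e => F (u x + e * w x) (u1 x + e * derive1n 1 w x) (u2 x + e * derive1n 2 w x)
    (u3 x + e * derive1n 3 w x) (u4 x + e * derive1n 4 w x)
    (c (u x + e * w x)) (c1 (u x + e * w x)) (c2 (u x + e * w x)) (c3 (u x + e * w x)).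
Proof.
(* the [derivable_upto] side conditions on [u] are closed by [u_smooth] *)
move=> dw; apply: funext => e.
by rewrite /jet_eval !derive1n_add_scale //; refine (derivable_upto_le dw _).
Qed.

Section Expansion.
Variable x : R.

Definition miura_coefs : {poly R} := \poly_(k < 5) jet_eval (miura_coef k) u x.

Definition miura_x_coefs : {poly R} := \poly_(k < 5) derive1 (jet_eval (miura_coef k) u) x.

(* Only the part c(u) u_1^3 of the flow, acting on the coefficient of h^8 in v,
   contributes to the coefficient of h^10 in v_t. *)
Definition miura_t_top : R :=
  derive1 (fun e => jet_eval (miura_coef 4) (fun y => u y + e * deformation_jet 0 y) x) 0.

Lemma miura_even h : miura h c u x = miura_coefs.[h ^+ 2].
Proof. exact: miura_poly_even. Qed.

(* keeps [/=] from unfolding the [derive1n] inside jets into [derive1] *)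
Arguments jet_eval : simpl never.

Lemma miura_x_even h : derive1n 1 (miura h c u) x = miura_x_coefs.[h ^+ 2].
Proof.
rewrite derive1n1 /miura_x_coefs horner_poly !big_ord_recr big_ord0 /=.
rewrite /jet_eval /miura /miura_poly /miura_coef; cbv beta iota.
by repeat rewrite_derive1; abstract_jets; field.
Qed.

Lemma miura_t_truncated h :
  miura_t h c u x =
  (take_poly 5 (miura_coefs * miura_x_coefs)).[h ^+ 2] + h ^+ 10 * miura_t_top.
Proof.
rewrite /miura_coefs /miura_x_coefs horner_take_poly_mul !big_ord_recr !big_ord0 /=.
rewrite /miura_t /miura_t_top; change (miura h c) with (jet_eval (miura_poly h)).
rewrite (jet_eval_shift _ _ x (derivable_upto_rhs h)) !derive1n_rhs // rhsE.
rewrite (jet_eval_shift _ _ x derivable_upto_deformation) !derive1n_deformation //.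
rewrite /jet_eval /miura_poly /miura_coef /rhs_jet /monge_jet /deformation_jet.
(* compute the indices (k - i)%N of the convolution *)
cbv delta [subn subn_rec Nat.sub] beta iota zeta.
by repeat rewrite_derive1; cbv beta; drop_zero_shifts; abstract_jets; field.
Qed.

End Expansion.
End Jets.

Theorem mainTheorem5 (R : realType) (c u : R -> R) :
  smooth c -> smooth u ->
  forall x : R, exists p : {poly R}, forall h : R,
    miura_t h c u x - miura h c u x * derive1n 1 (miura h c u) x = h ^+ 10 * p.[h].
Proof.
move=> c_smooth u_smooth x.
pose A := miura_coefs c u x; pose B := miura_x_coefs c u x.
exists (((miura_t_top c u x)%:P - drop_poly 5 (A * B)) \Po 'X^2); move=> h.
rewrite miura_t_truncated // miura_even miura_x_even //.
by rewrite (horner_mul_take_drop _ 5) horner_comp !hornerE; ring.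
Qed.
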